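(* Let $\mathcal S$ be a split system on $X$ that is circular with respect to a circular ordering $\pi_1$ of $X$, and let $\pi_2$ be another circular ordering of $X$. Then $\mathcal S$ is circular with respect to $\pi_2$ if and only if $\pi_2$ can be obtained from $\pi_1$ by a finite sequence of twists, each of which is admissible for $\mathcal S$ with respect to the ordering current at that step.
   Context: $X$ is a finite set of $n\ge 4$ labels. A split of $X$ is an unordered partition $\{A,B\}$ of $X$ into two nonempty sets; a split system is a set of splits. Two splits $\{A_1,B_1\}$, $\{A_2,B_2\}$ are compatible if at least one of $A_1\cap A_2$, $A_1\cap B_2$, $B_1\cap A_2$, $B_1\cap B_2$ is empty. A circular ordering of $X$ is a cyclic arrangement $\pi=(x_1,\dots,x_n)$ of the elements of $X$, considered up to rotation and reflection. A split is circular with respect to $\pi$ if it is of the form $\{\{x_{i+1},\dots,x_j\},\,X\setminus\{x_{i+1},\dots,x_j\}\}$ (indices mod $n$); a split system is circular with respect to $\pi$ if all its splits are. (Geometrically: label the edges of a regular $n$-gon cyclically by $x_1,\dots,x_n$; nontrivial splits circular w.r.t. $\pi$ are the diagonals, a diagonal separating the edge labels into the two parts; two such diagonals cross iff the splits are incompatible.) For a set $I=\{x_{i+1},\dots,x_j\}$ of cyclically consecutive elements of $\pi$ with $2\le |I|\le n-2$, the twist of $\pi$ along $I$ is the circular ordering $(x_1,\dots,x_i,x_j,x_{j-1},\dots,x_{i+1},x_{j+1},\dots,x_n)$ obtained by reversing the block $I$ (geometrically: cut the labeled polygon along the diagonal of $\{I,X\setminus I\}$, reflect one piece and reglue). Such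 a twist is admissible for a split system $\mathcal S$ circular w.r.t. $\pi$ if the split $\{I,X\setminus I\}$ (which may or may not belong to $\mathcal S$) is compatible with every split of $\mathcal S$, i.e. its diagonal crosses no diagonal representing $\mathcal S$. *)

From mathcomp Require Import all_boot.
Set Implicit Arguments. Unset Strict Implicit. Unset Printing Implicit Defensive.

Section Splits.
Variable X : finType.

Definition is_split (P : {set {set X}}) : bool :=
  partition P [set: X] && (#|P| == 2).

Definition compatible (P Q : {set {set X}}) : Prop :=
  exists A B, [/\ A \in P, B \in Q & A :&: B = set0].

(* A circular ordering is represented by a sequence s listing every element of X
   once (perm_eq s (enum X)); two representatives denote the same circular
   ordering iff they differ by rotation and/or reflection. *)
Definition is_ordering (s : seq X) : bool := perm_eq s (enum X).

Definition circ_equiv (s t : seq X) : Prop :=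
  exists k, t = rot k s \/ t = rot k (rev s).

Definition interval (s : seq X) (k l : nat) : {set X} := [set x in take l (rot k s)].

Definition split_of (I : {set X}) : {set {set X}} := [set I; ~: I].

Definition circular_split (s : seq X) (P : {set {set X}}) : Prop :=
  exists k l, [/\ 0 < l, l < #|X| & P = split_of (interval s k l)].

Definition circular (S : {set {set {set X}}}) (s : seq X) : Prop :=
  forall P, P \in S -> circular_split s P.

Definition twist (s : seq X) (k l : nat) : seq X :=
  rev (take l (rot k s)) ++ drop l (rot k s).

Definition adm_twist_step (S : {set {set {set X}}}) (s t : seq X) : Prop :=
  exists k l, [/\ 2 <= l, l <= #|X| - 2,
     (forall P, P \in S -> compatible (split_of (interval s k l)) P)
   & circ_equiv (twist s k l) t].

Inductive twist_reach (S : {set {set {set X}}}) : seq X -> seq X -> Prop :=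
  | tr_refl s t : circ_equiv s t -> twist_reach S s t
  | tr_step s u t : adm_twist_step S s u -> twist_reach S u t -> twist_reach S s t.

End Splits.

From mathcomp Require Import all_boot zify.
From Stdlib Require Import Classical.
Set Implicit Arguments. Unset Strict Implicit. Unset Printing Implicit Defensive.

(* A split is circular for an ordering iff its blocks are arcs (cyclic intervals) of it, and
   a twist along [I] preserves every arc whose split is compatible with [I]; this gives the
   "if" direction.  Conversely, let [S] be circular for [s] and [t] with [s] not equivalent
   to [t].  Some pair is adjacent in [t] but not in [s], so there are "candidates": disjoint
   common arcs [R1], [R2] of [s] and [t] whose union is an arc of [t] but not of [s].  Take
   one with [R1 :|: R2] maximal and rotate [s] so that [R1 = [0, a)] and [R2 = [b, c)].  Of
   the twists along [[a, c)] and [[0, b)], one is compatible with every common arc: if both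
   were crossed, the crossing arcs would either enlarge [R2], contradicting maximality, or
   be positioned inconsistently in [t].  Both twists make [R1 :|: R2] an arc.  Splits of [S]
   are common arcs, so this twist is admissible, keeps [S] circular and strictly increases the
   number of common arcs of the ordering and [t]. *)

Definition between (i k j : nat) : bool := (i < j < k) || (k < j < i).

Lemma between_subn m a b c : a <= m -> b <= m -> c <= m ->
  between (m - a) (m - c) (m - b) = between a c b.
Proof. rewrite /between => *; apply/idP/idP; lia. Qed.

(* Rotating by [k] (resp. flipping the first [l] positions) moves [b] to the other side of
   the chord [a c] iff exactly one of [a], [c] wraps around (resp. [b] is flipped and exactly
   one of [a], [c] is). *)
Lemma between_rot n k a b c : a < n -> b < n -> c < n -> k <= n -> a != b -> b != c ->
  between (if a < k then a + n - k else a - k) (if c < k then c + n - k else c - k)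
          (if b < k then b + n - k else b - k) = between a c b (+) ((a < k) != (c < k)).
Proof.
rewrite /between => *.
by case: (ltnP a k); case: (ltnP b k); case: (ltnP c k) => /= *; apply/idP/idP; lia.
Qed.

Lemma between_flip l a b c : a != b -> b != c ->
  between (if a < l then l.-1 - a else a) (if c < l then l.-1 - c else c)
          (if b < l then l.-1 - b else b)
  = between a c b (+) (((a < l) != (c < l)) && (b < l)).
Proof.
rewrite /between => *.
by case: (ltnP a l); case: (ltnP b l); case: (ltnP c l) => /= *; apply/idP/idP; lia.
Qed.

Lemma index_drop (T : eqType) (w : seq T) l x : uniq w -> x \in w -> l <= index x w ->
  index x (drop l w) = index x w - l.
Proof.
move=> u xin le.
have hi : index x w < size w by rewrite index_mem.
have e := index_cat x (take l w) (drop l w); rewrite cat_take_drop in e.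
have nt : (x \in take l w) = false by rewrite in_take_leq ?ltnNge ?le //; lia.
move: e; rewrite nt size_take; case: ltnP => h e; first lia.
by move: hi; rewrite e -{2}[size w]addn0 ltn_add2l.
Qed.

Lemma index_take (T : eqType) (w : seq T) l x : index x w < l ->
  index x (take l w) = index x w.
Proof.
move=> lt; have := index_cat x (take l w) (drop l w); rewrite cat_take_drop.
case: ifP => // hin e.
have hs : size w <= l.
  by case: (leqP (size w) l) => // h; move: lt; rewrite e size_take h; lia.
by rewrite take_oversize.
Qed.

Lemma mem_drop_index (T : eqType) (w : seq T) l x : uniq w -> x \in w ->
  (x \in drop l w) = (l <= index x w).
Proof.
move=> u xin.
have dis : ~~ has (mem (take l w)) (drop l w).
  by move: u; rewrite -{1}(cat_take_drop l w) cat_uniq => /and3P [].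
have xin' : (x \in take l w) || (x \in drop l w) by rewrite -mem_cat cat_take_drop.
case: (leqP l (index x w)) => h.
  by move: xin'; rewrite (in_take _ xin) ltnNge h.
have t : x \in take l w by rewrite in_take.
by apply/negbTE; apply: contraNN dis => d; apply/hasP; exists x.
Qed.

Definition flip_prefix (T : Type) (w : seq T) l := rev (take l w) ++ drop l w.

Lemma twistE (X : finType) (s : seq X) k l : twist s k l = flip_prefix (rot k s) l.
Proof. by []. Qed.

Section Positions.
Variable X : finType.
Local Notation n := #|X|.
Implicit Types (s w : seq X) (x y : X).

Definition pos s x := index x s.

Lemma ordering_size s : is_ordering s -> size s = n.
Proof. by move=> h; rewrite (perm_size h) cardE. Qed.

Lemma ordering_uniq s : is_ordering s -> uniq s.
Proof. by move=> h; rewrite (perm_uniq h) enum_uniq. Qed.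

Lemma ordering_mem s x : is_ordering s -> x \in s.
Proof. by move=> h; rewrite (perm_mem h) mem_enum. Qed.

Lemma ordering_rot s k : is_ordering s -> is_ordering (rot k s).
Proof. by rewrite /is_ordering perm_rot. Qed.

Lemma ordering_rev s : is_ordering s -> is_ordering (rev s).
Proof. by rewrite /is_ordering perm_rev. Qed.

Lemma ordering_flip w l : is_ordering w -> is_ordering (flip_prefix w l).
Proof.
move=> h; rewrite /is_ordering /flip_prefix; apply: perm_trans h.
rewrite -{3}(cat_take_drop l w).
by rewrite perm_cat2r perm_rev.
Qed.

Lemma ordering_twist s k l : is_ordering s -> is_ordering (twist s k l).
Proof. by move=> h; apply/ordering_flip/ordering_rot. Qed.

Lemma ordering_circ s t : is_ordering s -> circ_equiv s t -> is_ordering t.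
Proof. by move=> h [k [->|->]]; apply: ordering_rot => //; apply: ordering_rev. Qed.

Lemma pos_ltn s x : is_ordering s -> pos s x < n.
Proof. by move=> h; rewrite -(ordering_size h) index_mem ordering_mem. Qed.

Lemma pos_inj s x y : is_ordering s -> pos s x = pos s y -> x = y.
Proof.
move=> h e; rewrite -(nth_index x (ordering_mem x h)) -(nth_index x (ordering_mem y h)).
by rewrite /pos in e; rewrite e.
Qed.

Lemma pos_neq s x y : is_ordering s -> x != y -> pos s x != pos s y.
Proof. by move=> h; apply: contraNN => /eqP /(pos_inj h) ->. Qed.

Lemma pos_surj s i : is_ordering s -> i < n -> exists x, pos s x = i.
Proof.
case: s => [|x0 s'] h lt; first by move: (ordering_size h) lt => /= <-.
exists (nth x0 (x0 :: s') i); rewrite /pos index_uniq ?(ordering_size h) //.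
exact: ordering_uniq.
Qed.

Lemma pos_rot s k x : is_ordering s -> k <= n ->
  pos (rot k s) x = if pos s x < k then pos s x + n - k else pos s x - k.
Proof.
move=> h hk; rewrite /pos /rot.
have u := ordering_uniq h; have xin := ordering_mem x h; have sz := ordering_size h.
have hi : index x s < n by rewrite -sz index_mem.
rewrite index_cat mem_drop_index //.
case: (leqP k (index x s)) => c; first by rewrite index_drop.
rewrite index_take // size_drop sz; lia.
Qed.

Lemma pos_rev s x : is_ordering s -> pos (rev s) x = n.-1 - pos s x.
Proof.
move=> h; have u := ordering_uniq h; have xin := ordering_mem x h.
have sz := ordering_size h.
have hi : index x s < n by rewrite -sz index_mem.
rewrite /pos -{1}(nth_index x xin) -{1}(subKn (ltnW hi)).
have -> : n - index x s = (n.-1 - index x s).+1 by lia.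
rewrite -sz -nth_rev; last by rewrite sz; lia.
by rewrite index_uniq ?rev_uniq // size_rev sz; lia.
Qed.

Lemma pos_flip w l x : is_ordering w -> l <= n ->
  pos (flip_prefix w l) x = if pos w x < l then l.-1 - pos w x else pos w x.
Proof.
move=> h hl; have u := ordering_uniq h; have xin := ordering_mem x h.
have sz := ordering_size h.
have hi : index x w < n by rewrite -sz index_mem.
rewrite /pos /flip_prefix index_cat mem_rev in_take //.
case: ltnP => c; last first.
  by rewrite size_rev size_take sz index_drop //; case: ltnP => c2; lia.
have st : size (take l w) = l by rewrite size_take sz; case: ltnP => //; lia.
have ex : x = nth x (rev (take l w)) (l.-1 - index x w).
  rewrite nth_rev ?st; last by lia.
  rewrite nth_take; last by lia.
  have -> : l - (l.-1 - index x w).+1 = index x w by lia.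
  by rewrite nth_index.
rewrite {1}ex index_uniq ?rev_uniq ?take_uniq // size_rev st; lia.
Qed.

Lemma mem_interval s k l x : is_ordering s ->
  (x \in interval s k l) = (pos (rot k s) x < l).
Proof. by move=> h; rewrite /interval inE in_take // ordering_mem ?ordering_rot. Qed.

End Positions.

Section Arcs.
Variable X : finType.
Local Notation n := #|X|.
Implicit Types (s t w : seq X) (x y : X) (A B I K : {set X}).

(* [A] is cyclically consecutive in [s], expressed as a four-point condition: no chord
   joining two points of [A] separates two points outside [A]. *)
Definition is_arc s A : bool :=
  [forall a in A, forall b in ~: A, forall c in A, forall d in ~: A,
     between (pos s a) (pos s c) (pos s b) == between (pos s a) (pos s c) (pos s d)].

Lemma is_arcP s A : reflect
  (forall a b c d, a \in A -> b \notin A -> c \in A -> d \notin A ->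
     between (pos s a) (pos s c) (pos s b) = between (pos s a) (pos s c) (pos s d))
  (is_arc s A).
Proof.
apply: (iffP idP) => [/forall_inP H a b c d ha hb hc hd | H].
  move: (H a ha) => /forall_inP /(_ b); rewrite inE hb => /(_ isT).
  move=> /forall_inP /(_ c hc) /forall_inP /(_ d); rewrite inE hd.
  by move=> /(_ isT) /eqP.
apply/forall_inP => a ha; apply/forall_inP => b; rewrite inE => hb.
apply/forall_inP => c hc; apply/forall_inP => d; rewrite inE => hd.
by apply/eqP; apply: H.
Qed.

Definition segment s A lo hi : Prop := forall x, (x \in A) = (lo <= pos s x < hi).

Definition arc_seg s A : Prop :=
  exists lo hi, hi <= n /\ (segment s A lo hi \/ segment s (~: A) lo hi).

Lemma segmentC s A lo hi : segment s (~: A) lo hi ->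
  forall x, (x \in A) = ~~ (lo <= pos s x < hi).
Proof. by move=> r x; rewrite -r inE negbK. Qed.

Lemma arc_seg_is_arc s A : arc_seg s A -> is_arc s A.
Proof.
move=> [lo [hi [hn [r|/segmentC r]]]]; apply/is_arcP => a b c d;
  rewrite !r /between => *; apply/idP/idP; lia.
Qed.

Lemma segment_of_convex s B : is_ordering s ->
  (forall u v z, u \in B -> v \notin B -> z \in B -> ~~ (pos s u < pos s v < pos s z)) ->
  exists lo hi, hi <= n /\ segment s B lo hi.
Proof.
move=> h cv.
have [->|[x0 x0B]] := set_0Vmem B.
  by exists 0, 0; split => // x; rewrite inE; lia.
case: (arg_minnP (pos s) x0B) => xm xmB xmP; have {}xmB : xm \in B := xmB.
case: (arg_maxnP (pos s) x0B) => xM xMB xMP; have {}xMB : xM \in B := xMB.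
exists (pos s xm), (pos s xM).+1; split; first exact: pos_ltn.
move=> x; apply/idP/idP => [xB|/andP [h1 h2]].
  by rewrite xmP //= ltnS; apply: xMP.
apply/negPn/negP => xnB; have := cv _ _ _ xmB xnB xMB.
case: (ltngtP (pos s xm) (pos s x)) => [e1|e1|/(pos_inj h) e1].
- case: (ltngtP (pos s x) (pos s xM)) => [//|e2|/(pos_inj h) e2].
    by move: h2; rewrite ltnS leqNgt e2.
  by move: xnB; rewrite e2 xMB.
- by move: h1; rewrite leqNgt e1.
- by move: xnB; rewrite -e1 xmB.
Qed.

(* Three positions alternating in and out of [A] (in both patterns) contradict [is_arc s A]. *)
Lemma is_arc_seg s A : is_ordering s -> is_arc s A -> arc_seg s A.
Proof.
move=> h /is_arcP ar.
pose alt B := [exists u, exists v, exists z,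
  [&& u \in B, v \notin B, z \in B, pos s u < pos s v & pos s v < pos s z]].
have convex B : ~~ alt B -> exists lo hi, hi <= n /\ segment s B lo hi.
  move=> nalt; apply: segment_of_convex => // u v z uB vB zB.
  apply/negP => /andP [l1 l2]; move/negP: nalt; apply.
  by apply/existsP; exists u; apply/existsP; exists v; apply/existsP; exists z; apply/and5P.
have [altA|/convex [lo [hi [hn r]]]] := boolP (alt A); last by exists lo, hi; split; [|left].
have [altC|/convex [lo [hi [hn r]]]] := boolP (alt (~: A)); last by exists lo, hi; split; [|right].
move: altA => /existsP [u /existsP [v /existsP [z /and5P [uA vA zA l1 l2]]]].
move: altC => /existsP [u' /existsP [v' /existsP [z' /and5P]]].
rewrite !inE negbK => -[uA' vA' zA' l1' l2'].
case: (ltnP (pos s z) (pos s z')) => c1.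
  by have := ar _ _ _ _ uA vA zA zA'; rewrite /between; lia.
case: (ltnP (pos s u') (pos s u)) => c2.
  by have := ar _ _ _ _ uA vA zA uA'; rewrite /between; lia.
have ne1 := pos_neq h (memPn uA' _ uA); have ne2 := pos_neq h (memPn zA' _ zA).
by have := ar _ _ _ _ uA uA' vA' zA'; rewrite /between; lia.
Qed.

Lemma arc_segP s A : is_ordering s -> arc_seg s A <-> is_arc s A.
Proof. by move=> h; split; [exact: arc_seg_is_arc | exact: is_arc_seg]. Qed.

Lemma arc_segC s A : arc_seg s A -> arc_seg s (~: A).
Proof.
by move=> [lo [hi [hn [r|r]]]]; exists lo, hi; split => //; [right; rewrite setCK | left].
Qed.

Lemma is_arcC s A : is_ordering s -> is_arc s A -> is_arc s (~: A).
Proof. by move=> h /(arc_segP _ h) /arc_segC /(arc_segP _ h). Qed.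

Lemma is_arcT s : is_arc s [set: X].
Proof. by apply/is_arcP => a b c d _; rewrite inE. Qed.

Lemma is_arc_set1 s x : is_arc s [set x].
Proof. by apply/is_arcP => a b c d; rewrite !inE => /eqP -> _ /eqP ->; rewrite /between; lia. Qed.

Lemma is_arc_rot s k A : is_ordering s -> is_arc s A -> is_arc (rot k s) A.
Proof.
move=> h ar; have [hk|hk] := leqP k n; last first.
  by rewrite rot_oversize // (ordering_size h) ltnW.
move/is_arcP: ar => ar; apply/is_arcP => a b c d ha hb hc hd; rewrite !pos_rot //.
have nab := pos_neq h (memPn hb _ ha); have nad := pos_neq h (memPn hd _ ha).
have ncb := pos_neq h (memPn hb _ hc); have ncd := pos_neq h (memPn hd _ hc).
rewrite !between_rot ?pos_ltn ?(eq_sym (pos s d)) ?(eq_sym (pos s b)) //.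
by rewrite (ar _ _ _ _ ha hb hc hd).
Qed.

Lemma is_arc_rev s A : is_ordering s -> is_arc s A -> is_arc (rev s) A.
Proof.
move=> h /is_arcP ar; apply/is_arcP => a b c d ha hb hc hd.
have le x : pos s x <= n.-1 by rewrite -ltnS prednK ?pos_ltn // (leq_ltn_trans _ (pos_ltn a h)).
by rewrite !pos_rev // !between_subn //; exact: ar.
Qed.

Lemma is_arc_circ s t A : is_ordering s -> circ_equiv s t -> is_arc s A -> is_arc t A.
Proof.
move=> h [k [->|->]] ar; first exact: is_arc_rot.
by apply: is_arc_rot; [exact: ordering_rev | exact: is_arc_rev].
Qed.

Lemma is_arc_circE s t A : is_ordering s -> circ_equiv s t -> is_arc s A = is_arc t A.
Proof.
move=> h ce; apply/idP/idP; first exact: is_arc_circ.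
have hr := ordering_rev h.
case: ce => k [->|->] ar; first by rewrite -(rotK k s); apply: is_arc_rot => //; exact: ordering_rot.
rewrite -(revK s); apply: is_arc_rev => //; rewrite -(rotK k (rev s)).
by apply: is_arc_rot => //; exact: ordering_rot.
Qed.

Definition compat_blocks I K : Prop :=
  [\/ {subset K <= I}, {subset I <= K}, {subset I <= ~: K} | {subset ~: I <= K}].

Lemma compatible_splitP I K :
  compatible (split_of I) (split_of K) <-> compat_blocks I K.
Proof.
split.
  move=> [A [B [hA hB e]]]; move: hA hB e.
  rewrite !inE => /orP [] /eqP -> /orP [] /eqP -> /setP e;
    [constructor 3 | constructor 2 | constructor 1 | constructor 4] => x;
    have := e x; rewrite !inE; case: (x \in I); case: (x \in K) => //.
case=> h.
- exists (~: I), K; split; rewrite ?inE ?eqxx ?orbT //; apply/setP => x.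
  by rewrite !inE; case xK: (x \in K); rewrite ?andbF ?(h x xK).
- exists I, (~: K); split; rewrite ?inE ?eqxx ?orbT //; apply/setP => x.
  by rewrite !inE; case xI: (x \in I); rewrite ?(h x xI).
- exists I, K; split; rewrite ?inE ?eqxx ?orbT //; apply/setP => x.
  rewrite !inE; case xI: (x \in I) => //=.
  by have := h x xI; rewrite inE => /negbTE.
- exists (~: I), (~: K); split; rewrite ?inE ?eqxx ?orbT //; apply/setP => x.
  rewrite !inE; case xI: (x \in I) => //=.
  by have := h x; rewrite inE xI => /(_ isT) ->.
Qed.

Lemma is_arc_flip w l K : is_ordering w -> l <= n -> is_arc w K ->
  compat_blocks [set x | pos w x < l] K -> is_arc (flip_prefix w l) K.
Proof.
move=> h hl /is_arcP ar cp; apply/is_arcP => a b c d ha hb hc hd; rewrite !pos_flip //.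
have nab := pos_neq h (memPn hb _ ha); have nad := pos_neq h (memPn hd _ ha).
have ncb := pos_neq h (memPn hb _ hc); have ncd := pos_neq h (memPn hd _ hc).
rewrite !between_flip ?(eq_sym (pos w d)) ?(eq_sym (pos w b)) //.
rewrite (ar _ _ _ _ ha hb hc hd); congr addb.
case: cp => cp.
- by have := cp _ ha; have := cp _ hc; rewrite !inE => -> ->.
- have := contra (cp b) hb; have := contra (cp d) hd; rewrite !inE.
  by move=> /negbTE -> /negbTE ->; rewrite !andbF.
- have out x : x \in K -> (pos w x < l) = false.
    by move=> xK; apply/negbTE; apply: contraL xK => lt; have := cp x; rewrite !inE lt => /(_ isT).
  by rewrite (out a ha) (out c hc).
- have inside x : x \notin K -> pos w x < l.
    by move=> xK; apply/negPn/negP => nlt; move/negP: xK; apply; apply: cp; rewrite !inE nlt.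
  by rewrite (inside b hb) (inside d hd).
Qed.

Lemma is_arc_twist s k l A : is_ordering s -> l <= n -> is_arc s A ->
  compat_blocks (interval s k l) A -> is_arc (twist s k l) A.
Proof.
move=> h hl ar cp; rewrite twistE; apply: is_arc_flip; rewrite ?is_arc_rot ?ordering_rot //.
suff -> : [set x | pos (rot k s) x < l] = interval s k l by [].
by apply/setP => x; rewrite inE mem_interval.
Qed.

Lemma interval_is_arc s k l : is_ordering s -> is_arc s (interval s k l).
Proof.
move=> h; rewrite -{1}(rotK k s); apply: is_arc_rot; first exact: ordering_rot.
apply: arc_seg_is_arc; exists 0, (minn l n); split; first by rewrite geq_minr.
by left => x; rewrite mem_interval //; have := pos_ltn x (ordering_rot k h); lia.
Qed.

Lemma is_arc_interval s A : is_ordering s -> is_arc s A -> A != set0 -> A != setT ->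
  exists k l, [/\ 0 < l, l < n & A = interval s k l].
Proof.
move=> h /(arc_segP _ h) [lo [hi [hn r]]] /set0Pn [x xA] nT.
have /subsetPn [y _ yA] : ~~ ([set: X] \subset A) by rewrite subTset.
have px := pos_ltn x h; have py := pos_ltn y h.
case: r => [r|/segmentC r]; move: xA yA; rewrite !r => xA yA.
- exists lo, (hi - lo); split; try lia.
  apply/setP => z; rewrite mem_interval // r pos_rot //; last by lia.
  by have pz := pos_ltn z h; case: (ltnP (pos s z) lo) => *; apply/idP/idP; lia.
- exists hi, (n - hi + lo); split; try lia.
  apply/setP => z; rewrite mem_interval // r pos_rot //.
  by have pz := pos_ltn z h; case: (ltnP (pos s z) hi) => *; apply/idP/idP; lia.
Qed.

Lemma is_arc_rot_prefix s A : is_ordering s -> is_arc s A -> A != set0 ->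
  exists k m, [/\ k <= n, 0 < m, m <= n & segment (rot k s) A 0 m].
Proof.
move=> h /(arc_segP _ h) [lo [hi [hn [r|/segmentC r]]]] /set0Pn [x xA];
  move: xA; rewrite r => xA; have px := pos_ltn x h.
- exists lo, (hi - lo); split; try lia.
  move=> z; rewrite r pos_rot //; last by lia.
  by have pz := pos_ltn z h; case: (ltnP (pos s z) lo) => *; apply/idP/idP; lia.
- case: (leqP hi lo) => hl.
    exists 0, n; split; try lia.
    by move=> z; rewrite r rot0; have pz := pos_ltn z h; apply/idP/idP; lia.
  exists hi, (n - hi + lo); split; try lia.
  move=> z; rewrite r pos_rot //.
  by have pz := pos_ltn z h; case: (ltnP (pos s z) hi) => *; apply/idP/idP; lia.
Qed.

End Arcs.

Section Candidates.
Variable X : finType.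
Local Notation n := #|X|.
Implicit Types (s t u v : seq X) (x y : X) (A I K R : {set X}).

(* A pair of common arcs that a twist of [s] should merge; a maximal one drives the proof. *)
Definition candidate s t R1 R2 : Prop :=
  R1 != set0 /\ R2 != set0 /\ [disjoint R1 & R2] /\ (is_arc s R1 /\ is_arc t R1) /\
  (is_arc s R2 /\ is_arc t R2) /\ is_arc t (R1 :|: R2) /\ ~~ is_arc s (R1 :|: R2).

Lemma candidate_sym s t R1 R2 : candidate s t R1 R2 -> candidate s t R2 R1.
Proof.
move=> [h1 [h2 [h3 [h4 [h5 [h6 h7]]]]]]; rewrite /candidate setUC disjoint_sym.
by do !split => //; try apply: h4; try apply: h5.
Qed.

Lemma candidate_circ s t u v R1 R2 : is_ordering s -> is_ordering t ->
  circ_equiv s u -> circ_equiv t v -> candidate u v R1 R2 -> candidate s t R1 R2.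
Proof.
move=> hs ht cu cv; rewrite /candidate !(is_arc_circE _ hs cu) !(is_arc_circE _ ht cv).
by [].
Qed.

Lemma not_compat_blocks I K : ~ compat_blocks I K ->
  exists x1 x2 x3 x4, [/\ x1 \in K :\: I, x2 \in I :\: K, x3 \in I :&: K & x4 \notin I :|: K].
Proof.
move=> nc.
have witness (A B : {set X}) : ~ {subset A <= B} -> exists x, x \in A :\: B.
  move=> nsub; apply: NNPP => nx; apply: nsub => x xA; apply/negPn/negP => xB.
  by apply: nx; exists x; rewrite inE xA xB.
have [x1 h1] : exists x, x \in K :\: I by apply: witness => h; apply: nc; constructor 1.
have [x2 h2] : exists x, x \in I :\: K by apply: witness => h; apply: nc; constructor 2.
have [x3 h3] : exists x, x \in I :\: ~: K by apply: witness => h; apply: nc; constructor 3.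
have [x4 h4] : exists x, x \in ~: I :\: K by apply: witness => h; apply: nc; constructor 4.
exists x1, x2, x3, x4; split => //.
  by move: h3; rewrite !inE negbK andbC.
by move: h4; rewrite !inE negb_or andbC.
Qed.

Lemma crossing_segment_mid u K a c : arc_seg u K ->
  ~ compat_blocks [set x | a <= pos u x < c] K ->
  exists K0, (K0 = K \/ K0 = ~: K) /\ exists lo hi,
    (segment u K0 lo hi /\ a < lo < c /\ c < hi <= n) \/
    (segment u (~: K0) lo hi /\ lo < a < hi /\ hi < c).
Proof.
move=> [lo [hi [hn [r|r]]]] /not_compat_blocks [x1 [x2 [x3 [x4 []]]]];
  rewrite !inE ?negb_or ?r ?(segmentC r) => /andP [? ?] /andP [? ?] /andP [? ?] /andP [? ?].
- case: (ltnP a lo) => al.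
    by exists K; split; [left | exists lo, hi; left; split => //; lia].
  exists (~: K); split; first by right.
  by exists lo, hi; right; rewrite setCK; split => //; lia.
- case: (ltnP a lo) => al.
    by exists (~: K); split; [right | exists lo, hi; left; split => //; lia].
  by exists K; split; [left | exists lo, hi; right; split => //; lia].
Qed.

Lemma crossing_segment_prefix u K b : is_ordering u -> arc_seg u K ->
  ~ compat_blocks [set x | pos u x < b] K ->
  exists K0, (K0 = K \/ K0 = ~: K) /\ exists lo hi, segment u K0 lo hi /\ 0 < lo < b /\ b < hi < n.
Proof.
move=> hu [lo [hi [hn [r|r]]]] /not_compat_blocks [x1 [x2 [x3 [x4 []]]]];
  have := pos_ltn x4 hu; have := pos_ltn x1 hu;
  rewrite !inE ?negb_or ?r ?(segmentC r) => ? ? /andP [? ?] /andP [? ?] /andP [? ?] /andP [? ?].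
- by exists K; split; [left | exists lo, hi; split => //; lia].
- by exists (~: K); split; [right | exists lo, hi; split => //; lia].
Qed.

End Candidates.

(* [lia] slows down exponentially with boolean membership hypotheses in context. *)
Ltac lia_pos :=
  repeat match goal with
  | H : is_true (_ \in _) |- _ => clear H
  | H : is_true (~~ (_ \in _)) |- _ => clear H
  end; lia.

Section Crossing.
Variable X : finType.
Local Notation n := #|X|.

Definition segment_around (s : seq X) K i : Prop :=
  exists lo hi, [/\ segment s K lo hi, hi <= n, lo < i & i < hi].

Variables (u v : seq X) (R1 R2 : {set X}) (a b c a' j : nat).
Hypotheses (hu : is_ordering u) (hv : is_ordering v).
Hypotheses (a_gt0 : 0 < a) (ab : a < b) (bc : b < c) (cn : c < n).
Hypotheses (a'_gt0 : 0 < a') (a'j : a' < j) (jn : j < n).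
Hypotheses (r1 : segment u R1 0 a) (r2 : segment u R2 b c).
Hypotheses (r1' : segment v R1 0 a') (r2' : segment v R2 a' j).

Lemma segment_around_end K y1 y2 z1 z2 : is_arc v K ->
  y1 \in K -> y1 \in R2 -> y2 \in K -> y2 \notin R1 -> y2 \notin R2 ->
  z1 \notin K -> z1 \in R1 -> z2 \notin K -> z2 \notin R1 -> z2 \notin R2 ->
  segment_around v K j.
Proof.
move=> /(is_arc_seg hv) [lo [hi [hn [r|r]]]].
- by rewrite !r !r1' !r2' => *; exists lo, hi; split => //; lia.
- by rewrite !(segmentC r) !r1' !r2' => *; lia.
Qed.

Lemma candidate_extend K lo hi y : segment u K lo hi -> a < lo < c -> b < hi < n ->
  segment_around v K j -> y \in K -> y \notin R1 -> y \notin R2 ->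
  candidate u v R1 (R2 :|: K) /\ #|R1 :|: R2| < #|R1 :|: (R2 :|: K)|.
Proof.
move=> rk lo_ac hi_bn [lo' [hi' [rk' hi'n lo'j jhi']]] yK yR1 yR2.
have la' : a' <= lo'.
  case: (leqP a' lo') => // lt.
  have [g pg] := pos_surj hv (i := lo') ltac:(lia).
  have gK : g \in K by rewrite rk' pg; lia.
  have gR1 : g \in R1 by rewrite r1' pg; lia.
  by move: gK gR1; rewrite rk r1; lia.
have ru : segment u (R2 :|: K) (minn b lo) (maxn c hi).
  by move=> x; rewrite inE r2 rk; apply/idP/idP; lia.
have rv : segment v (R2 :|: K) a' hi'.
  by move=> x; rewrite inE r2' rk'; apply/idP/idP; lia.
have rv2 : segment v (R1 :|: (R2 :|: K)) 0 hi'.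
  by move=> x; rewrite inE rv r1'; apply/idP/idP; lia.
have [e0 p0] := pos_surj hu (i := 0) ltac:(lia).
split; last first.
  apply: proper_card; apply/properP; split; first by rewrite setUA subsetUl.
  by exists y; rewrite !inE ?yK ?orbT //; apply/norP.
split; first by apply/set0Pn; exists e0; rewrite r1 p0.
split; first by apply/set0Pn; exists y; rewrite inE yK orbT.
split; first by rewrite disjoints_subset; apply/subsetP => x; rewrite in_setC r1 ru; lia.
split; first by split; apply: arc_seg_is_arc; [exists 0, a | exists 0, a']; split; try lia; left.
split; first by split; apply: arc_seg_is_arc;
  [exists (minn b lo), (maxn c hi) | exists a', hi']; split; try lia; left.
split; first by apply: arc_seg_is_arc; exists 0, hi'; split => //; left.
(* positions [0] and [minn b lo] lie in the union, [a] and [n - 1] do not: a crossing chord *)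
apply/negP => /is_arcP ar.
have [ea pa] := pos_surj hu (i := a) ltac:(lia).
have [em pm] := pos_surj hu (i := minn b lo) ltac:(lia).
have [el pl] := pos_surj hu (i := n.-1) ltac:(lia).
have i0 : e0 \in R1 :|: (R2 :|: K) by rewrite inE r1 p0; lia.
have ia : ea \notin R1 :|: (R2 :|: K) by rewrite inE r1 ru pa; lia.
have im : em \in R1 :|: (R2 :|: K) by rewrite inE ru pm; lia.
have il : el \notin R1 :|: (R2 :|: K) by rewrite inE r1 ru pl; lia.
by have := ar _ _ _ _ i0 ia im il; rewrite p0 pa pm pl /between; lia.
Qed.

Hypothesis maximal :
  forall R1' R2', candidate u v R1' R2' -> #|R1' :|: R2'| <= #|R1 :|: R2|.

Lemma crossing_mid K : is_arc u K -> is_arc v K ->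
  ~ compat_blocks [set x | a <= pos u x < c] K ->
  exists Ka, [/\ segment_around v Ka j, forall x, c <= pos u x -> x \in Ka
               & forall x, pos u x = a -> x \notin Ka].
Proof.
move=> aKu aKv nc.
have [K0 [eK0 [lo [hi hK0]]]] := crossing_segment_mid (is_arc_seg hu aKu) nc.
have aK0 : is_arc v K0 by case: eK0 => ->; last exact: is_arcC.
have [ec1 pc1] := pos_surj hu (i := c.-1) ltac:(lia_pos).
have [ec pc] := pos_surj hu (i := c) ltac:(lia_pos).
have [ea1 pa1] := pos_surj hu (i := a.-1) ltac:(lia_pos).
have [ea pa] := pos_surj hu (i := a) ltac:(lia_pos).
have ec1R2 : ec1 \in R2 by rewrite r2 pc1; lia_pos.
have ecR1 : ec \notin R1 by rewrite r1 pc; lia_pos.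
have ecR2 : ec \notin R2 by rewrite r2 pc; lia_pos.
have ea1R1 : ea1 \in R1 by rewrite r1 pa1; lia_pos.
have eaR1 : ea \notin R1 by rewrite r1 pa; lia_pos.
have eaR2 : ea \notin R2 by rewrite r2 pa; lia_pos.
have [ec1K ecK ea1K eaK] : [/\ ec1 \in K0, ec \in K0, ea1 \notin K0 & ea \notin K0].
  by case: hK0 => [[rK [? ?]]|[/segmentC rK [? ?]]]; rewrite !rK pc1 pc pa1 pa; split; lia_pos.
have around := segment_around_end aK0 ec1K ec1R2 ecK ecR1 ecR2 ea1K ea1R1 eaK eaR1 eaR2.
have posa x : pos u x = a -> x \notin K0.
  by move=> px; rewrite (pos_inj hu (etrans px (esym pa))).
case: hK0 => [[rK [lh1 lh2]]|[/segmentC rK [lh1 lh2]]].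
- case: (ltnP hi n) => hin.
    have [cd lt] := candidate_extend rK (ltac:(lia_pos) : a < lo < c) (ltac:(lia_pos) : b < hi < n)
                      around ecK ecR1 ecR2.
    by have := maximal cd; lia_pos.
  by exists K0; split => // x cx; rewrite rK; have := pos_ltn x hu; lia_pos.
- by exists K0; split => // x cx; rewrite rK; lia_pos.
Qed.

Lemma crossing_prefix K : is_arc u K -> is_arc v K ->
  ~ compat_blocks [set x | pos u x < b] K ->
  exists Kb, [/\ segment_around v Kb j, forall x, a <= pos u x < b -> x \in Kb
               & forall x, pos u x = n.-1 -> x \notin Kb].
Proof.
move=> aKu aKv nc.
have [K0 [eK0 [lo [hi [rK [lh1 lh2]]]]]] := crossing_segment_prefix hu (is_arc_seg hu aKu) nc.
have aK0 : is_arc v K0 by case: eK0 => ->; last exact: is_arcC.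
have [e0 p0] := pos_surj hu (i := 0) ltac:(lia_pos).
have [eb1 pb1] := pos_surj hu (i := b.-1) ltac:(lia_pos).
have [eb pb] := pos_surj hu (i := b) ltac:(lia_pos).
have [el pl] := pos_surj hu (i := n.-1) ltac:(lia_pos).
have around : segment_around v K0 j.
  apply: (segment_around_end (y1 := eb) (y2 := eb1) (z1 := e0) (z2 := el)) => //;
    by rewrite ?rK ?r1 ?r2 ?pb ?pb1 ?p0 ?pl; lia_pos.
have eb1K : eb1 \in K0 by rewrite rK pb1; lia_pos.
have eb1R1 : eb1 \notin R1 by rewrite r1 pb1; lia_pos.
have eb1R2 : eb1 \notin R2 by rewrite r2 pb1; lia_pos.
case: (leqP lo a) => la.
  exists K0; split => // x; first by rewrite rK; lia_pos.
  by move=> px; rewrite rK px; lia_pos.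
have [cd lt] := candidate_extend rK (ltac:(lia_pos) : a < lo < c) (ltac:(lia_pos) : b < hi < n)
                  around eb1K eb1R1 eb1R2.
by have := maximal cd; lia_pos.
Qed.

(* Both twists failing would give two segments of [v] around [j] containing each other's
   excluded point (positions [a] and [n - 1] of [u]). *)
Lemma twist_choice :
  (forall K, is_arc u K -> is_arc v K -> compat_blocks [set x | a <= pos u x < c] K) \/
  (forall K, is_arc u K -> is_arc v K -> compat_blocks [set x | pos u x < b] K).
Proof.
case: (classic (forall K, is_arc u K -> is_arc v K ->
  compat_blocks [set x | a <= pos u x < c] K)) => H1; first by left.
right => K2 aK2u aK2v; apply: NNPP => nc2.
have [K1 [aK1u aK1v nc1]] : exists K1, [/\ is_arc u K1, is_arc v K1 &
    ~ compat_blocks [set x | a <= pos u x < c] K1].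
  apply: NNPP => hh; apply: H1 => K aKu aKv; apply: NNPP => nc.
  by apply: hh; exists K.
have [Ka [[lo1 [hi1 [rKa _ lo1j jhi1]]] geqc_Ka a_Ka]] := crossing_mid aK1u aK1v nc1.
have [Kb [[lo2 [hi2 [rKb _ lo2j jhi2]]] ab_Kb last_Kb]] := crossing_prefix aK2u aK2v nc2.
have [ea pa] := pos_surj hu (i := a) ltac:(lia_pos).
have [el pl] := pos_surj hu (i := n.-1) ltac:(lia_pos).
have := a_Ka _ pa; have := last_Kb _ pl.
have := ab_Kb ea (ltac:(lia_pos) : a <= pos u ea < b).
have := geqc_Ka el (ltac:(lia_pos) : c <= pos u el).
have : ea \notin R1 :|: R2 by rewrite !inE r1 r2 pa; lia_pos.
have : el \notin R1 :|: R2 by rewrite !inE r1 r2 pl; lia_pos.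
rewrite !inE !r1' !r2' !rKa !rKb.
by move: (pos v ea) (pos v el) => x y; lia_pos.
Qed.

End Crossing.

Section Merging.
Variable X : finType.
Local Notation n := #|X|.
Implicit Types (s t u v : seq X) (x y : X) (A J R : {set X}).

Definition merging_twist s t A k l : Prop :=
  [/\ 2 <= l, l <= n - 2,
      forall K, is_arc s K -> is_arc t K -> compat_blocks (interval s k l) K
    & is_arc (twist s k l) A].

Lemma segment_split v J R1 R2 j : is_ordering v -> segment v J 0 j -> j < n ->
  J = R1 :|: R2 -> [disjoint R1 & R2] -> R1 != set0 -> R2 != set0 ->
  is_arc v R1 -> is_arc v R2 ->
  exists2 a', 0 < a' < j &
    (segment v R1 0 a' /\ segment v R2 a' j) \/ (segment v R2 0 a' /\ segment v R1 a' j).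
Proof.
move=> hv rJ jn eJ dis /set0Pn [x1 x1R] /set0Pn [x2 x2R] /(is_arc_seg hv) ar1 /is_arcP ar2.
have mR2 x : (x \in R2) = (x \in J) && (x \notin R1).
  rewrite eJ inE; case: (boolP (x \in R1)) => xR1 /=; last by rewrite andbT.
  by rewrite (disjointFr dis xR1).
have inJ x : x \in R1 -> pos v x < j.
  by move=> xR1; move: (rJ x); rewrite eJ inE xR1; lia.
have [lo [hi [hn r]]] : exists lo hi, hi <= n /\ segment v R1 lo hi.
  case: ar1 => lo [hi [hn [r|/segmentC r]]]; first by exists lo, hi.
  case: (ltnP hi n) => hin.
    have [e pe] := pos_surj hv (i := n.-1) ltac:(lia).
    by have := inJ e; rewrite r pe; lia.
  exists 0, (minn lo n); split; first by lia.
  by move=> x; rewrite r; have px := pos_ltn x hv; apply/idP/idP; lia.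
have mR2' x : (x \in R2) = (pos v x < j) && ~~ (lo <= pos v x < hi) by rewrite mR2 rJ r.
move: x1R x2R; rewrite r mR2' => x1R x2R.
have hij : hi <= j.
  have [e pe] := pos_surj hv (i := hi.-1) ltac:(lia).
  by have := inJ e; rewrite r pe; lia.
case: (posnP lo) => l0.
  exists hi; first by lia.
  left; split; first by move=> x; rewrite r l0.
  by move=> x; rewrite mR2'; apply/idP/idP; lia.
case: (ltnP hi j) => hj; last first.
  exists lo; first by lia.
  right; split; first by move=> x; rewrite mR2'; apply/idP/idP; lia.
  by move=> x; rewrite r; apply/idP/idP; lia.
(* otherwise [R2] would be split in two by [R1] *)
have [e0 p0] := pos_surj hv (i := 0) ltac:(lia).
have [el pl] := pos_surj hv (i := lo) ltac:(lia).
have [eh ph] := pos_surj hv (i := hi) ltac:(lia).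
have [ej pj] := pos_surj hv (i := j) ltac:(lia).
have i0 : e0 \in R2 by rewrite mR2' p0; lia.
have il : el \notin R2 by rewrite mR2' pl; lia.
have ih : eh \in R2 by rewrite mR2' ph; lia.
have ij : ej \notin R2 by rewrite mR2' pj; lia.
by have := ar2 _ _ _ _ i0 il ih ij; rewrite p0 pl ph pj /between; lia.
Qed.

Lemma segment_after u A1 A2 a : is_ordering u -> 0 < a -> segment u A1 0 a ->
  arc_seg u A2 -> A2 != set0 -> [disjoint A1 & A2] -> ~ arc_seg u (A1 :|: A2) ->
  exists b c, [/\ a < b < c, c < n & segment u A2 b c].
Proof.
move=> hu a0 r1 ar2 /set0Pn [x2 x2R] dis nar.
have [e0 p0] := pos_surj hu (i := 0) ltac:(have := pos_ltn x2 hu; lia).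
have e0A1 : e0 \in A1 by rewrite r1 p0.
have e0A2 : e0 \notin A2 by rewrite (disjointFr dis e0A1).
have [lo [hi [hn r]]] : exists lo hi, hi <= n /\ segment u A2 lo hi.
  case: ar2 => lo [hi [hn [r|/segmentC r]]]; first by exists lo, hi.
  exists hi, n; split => //; move: e0A2; rewrite r p0 => e0A2.
  by move=> x; rewrite r; have px := pos_ltn x hu; apply/idP/idP; lia.
move: x2R; rewrite r => x2R.
have [el pl] := pos_surj hu (i := lo) ltac:(lia).
have loa : a <= lo.
  have elA2 : el \in A2 by rewrite r pl; lia.
  by have := disjointFl dis elA2; rewrite r1 pl; lia.
case: (ltnP a lo) => alo; last first.
  exfalso; apply: nar; exists 0, hi; split => //; left.
  by move=> x; rewrite inE r1 r; apply/idP/idP; lia.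
case: (ltnP hi n) => hin; last first.
  exfalso; apply: nar; exists a, lo; split; first by lia.
  by right => x; rewrite !inE r1 r; have px := pos_ltn x hu; apply/idP/idP; lia.
by exists lo, hi; split => //; lia.
Qed.

Section Maximal.
Variables (s t : seq X) (R1 R2 : {set X}).
Hypotheses (hs : is_ordering s) (ht : is_ordering t) (cd : candidate s t R1 R2).
Hypothesis maximal :
  forall R1' R2', candidate s t R1' R2' -> #|R1' :|: R2'| <= #|R1 :|: R2|.

Lemma merging_twist_normal v a' j : circ_equiv t v -> 0 < a' < j -> j < n ->
  segment v R1 0 a' -> segment v R2 a' j -> exists k l, merging_twist s t (R1 :|: R2) k l.
Proof.
move=> cv /andP [a'0 a'j] jn r1' r2'; have hv := ordering_circ ht cv.
have [h1 [h2 [h3 [[h4 _] [[h5 _] [_ h7]]]]]] := cd.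
have [k1 [a [k1n a0 an r1]]] := is_arc_rot_prefix hs h4 h1.
set u := rot k1 s in r1.
have hu : is_ordering u by apply: ordering_rot.
have cu : circ_equiv s u by exists k1; left.
have ar2 : arc_seg u R2 by apply: is_arc_seg; rewrite // -(is_arc_circE _ hs cu).
have nar : ~ arc_seg u (R1 :|: R2).
  by move=> /arc_seg_is_arc; rewrite -(is_arc_circE _ hs cu) (negbTE h7).
have [b [c [/andP [ab bc] cn r2]]] := segment_after hu a0 r1 ar2 h2 h3 nar.
clear h1 h2 h3 h4 h5 h7 ar2 nar.
have maximal' R1' R2' : candidate u v R1' R2' -> #|R1' :|: R2'| <= #|R1 :|: R2|.
  by move=> cd'; apply: maximal; apply: candidate_circ hs ht cu cv cd'.
have common K : is_arc s K -> is_arc t K -> is_arc u K /\ is_arc v K.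
  by rewrite (is_arc_circE _ hs cu) (is_arc_circE _ ht cv).
case: (twist_choice hu hv a0 ab bc cn a'0 a'j jn r1 r2 r1' r2' maximal') => H.
- have [k ek] : exists k, rot k s = rot a u by exists (rot_add s k1 a); rewrite rot_rot_add.
  have eI : interval s k (c - a) = [set x | a <= pos u x < c].
    apply/setP => x; rewrite mem_interval // ek inE pos_rot //.
    by have px := pos_ltn x hu; case: (ltnP (pos u x) a) => c1; apply/idP/idP; lia.
  exists k, (c - a); split; [lia | lia | |].
    by move=> K aK aK'; rewrite eI; have [] := common K aK aK'; exact: H.
  rewrite twistE ek; apply: arc_seg_is_arc; exists (c - b), (n - a); split; first by lia.
  have hca : c - a <= n by lia.
  right => x; rewrite !inE r1 r2 pos_flip ?ordering_rot // pos_rot //.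
  have px := pos_ltn x hu.
  by case: (ltnP (pos u x) a) => c1; case: ifP => c2; apply/idP/idP; lia.
- exists k1, b; split; [lia | lia | |].
    move=> K aK aK'; have -> : interval s k1 b = [set x | pos u x < b].
      by apply/setP => x; rewrite mem_interval // inE.
    by have [] := common K aK aK'; exact: H.
  rewrite twistE -/u; apply: arc_seg_is_arc; exists (b - a), c; split; first by lia.
  left => x; rewrite !inE r1 r2 pos_flip //; last by lia.
  by have px := pos_ltn x hu; case: (ltnP (pos u x) b) => c1; apply/idP/idP; lia.
Qed.

End Maximal.

Lemma merging_twist_of_candidate s t R1 R2 : is_ordering s -> is_ordering t ->
  candidate s t R1 R2 ->
  (forall R1' R2', candidate s t R1' R2' -> #|R1' :|: R2'| <= #|R1 :|: R2|) ->
  exists k l, merging_twist s t (R1 :|: R2) k l.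
Proof.
move=> hs ht cd maximal.
have [h1 [h2 [h3 [[_ h4] [[_ h5] [h6 h7]]]]]] := cd.
have J0 : R1 :|: R2 != set0.
  by move: h1 => /set0Pn [x xR]; apply/set0Pn; exists x; rewrite inE xR.
have [k0 [j [k0n j0 jn' rJ]]] := is_arc_rot_prefix ht h6 J0.
set v := rot k0 t in rJ.
have hv : is_ordering v by apply: ordering_rot.
have cv : circ_equiv t v by exists k0; left.
have jn : j < n.
  case: (ltnP j n) => // jn; move/negP: h7; case.
  suff -> : R1 :|: R2 = [set: X] by apply: is_arcT.
  by apply/setP => x; rewrite in_setT rJ; have := pos_ltn x hv; lia.
have ar1 : is_arc v R1 by rewrite -(is_arc_circE _ ht cv).
have ar2 : is_arc v R2 by rewrite -(is_arc_circE _ ht cv).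
have [a' aj [[r1 r2]|[r2 r1]]] := segment_split hv rJ jn (erefl _) h3 h1 h2 ar1 ar2.
  exact: (merging_twist_normal hs ht cd maximal cv aj jn r1 r2).
have maximal' R1' R2' : candidate s t R1' R2' -> #|R1' :|: R2'| <= #|R2 :|: R1|.
  by rewrite [R2 :|: R1]setUC; apply: maximal.
by rewrite setUC; exact: (merging_twist_normal hs ht (candidate_sym cd) maximal' cv aj jn r2 r1).
Qed.

End Merging.

Section Adjacency.
Variable X : finType.
Local Notation n := #|X|.
Implicit Types (s t u w T : seq X) (x y z : X).

Lemma adjacent_pos w x y : is_ordering w -> x != y -> is_arc w [set x; y] ->
  [\/ pos w y = (pos w x).+1, pos w x = (pos w y).+1,
      pos w x = 0 /\ pos w y = n.-1 | pos w y = 0 /\ pos w x = n.-1].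
Proof.
move=> hw.
wlog: x y / pos w x < pos w y.
  move=> W nxy ar; case: (ltngtP (pos w x) (pos w y)) => c.
  - exact: W.
  - have : [set y; x] = [set x; y] by rewrite setUC.
    move=> e; rewrite -e in ar.
    by case: (W y x c _ ar); rewrite 1?eq_sym // => *; [constructor 2|constructor 1|constructor 4|constructor 3].
  - by move: nxy; rewrite (pos_inj hw c) eqxx.
move=> lt nxy /is_arcP ar.
have px := pos_ltn x hw; have py := pos_ltn y hw.
have xi : x \in [set x; y] by rewrite !inE eqxx.
have yi : y \in [set x; y] by rewrite !inE eqxx orbT.
have mid z : pos w x < pos w z < pos w y -> z \notin [set x; y].
  by move=> hz; rewrite !inE; apply: contraL hz => /orP [] /eqP ->; lia.
have out z : ~~ (pos w x <= pos w z <= pos w y) -> z \notin [set x; y].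
  by move=> hz; rewrite !inE; apply: contra hz => /orP [] /eqP ->; lia.
have separated m o : pos w x < pos w m < pos w y -> ~~ (pos w x <= pos w o <= pos w y) -> False.
  by move=> hm ho; have := ar _ _ _ _ xi (mid m hm) yi (out o ho); rewrite /between; lia.
case: (ltnP (pos w y) (pos w x).+2) => c1; first by constructor 1; lia.
have [m pm] := pos_surj hw (i := (pos w x).+1) ltac:(lia).
case: (posnP (pos w x)) => c2.
  case: (ltnP (pos w y) n.-1) => c3; last by constructor 3; lia.
  have [o po] := pos_surj hw (i := n.-1) ltac:(lia).
  by exfalso; apply: (separated m o); rewrite ?pm ?po; lia.
have [o po] := pos_surj hw (i := 0) ltac:(lia).
by exfalso; apply: (separated m o); rewrite ?pm ?po; lia.
Qed.

Lemma segment_pair T x y i : is_ordering T -> pos T x = i -> pos T y = i.+1 ->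
  segment T [set x; y] i i.+2.
Proof.
move=> hT px py z; rewrite !inE.
apply/idP/idP.
  by case/orP => /eqP ->; lia.
move=> hz; case: (ltnP (pos T z) i.+1) => c.
  by apply/orP; left; apply/eqP; apply: (pos_inj hT); lia.
by apply/orP; right; apply/eqP; apply: (pos_inj hT); lia.
Qed.

Lemma eq_ordering_of_adjacent u T : is_ordering u -> is_ordering T -> 2 < n ->
  (forall x y, x != y -> is_arc T [set x; y] -> is_arc u [set x; y]) ->
  forall x0 z1, pos u x0 = 0 -> pos T x0 = 0 -> pos u z1 = 1 -> pos T z1 = 1 ->
  u = T.
Proof.
move=> hu hT n3 H x0 z1 u0 T0 u1 T1.
have key : forall i, 0 < i -> i < n -> forall z, pos T z <= i -> pos u z = pos T z.
  elim=> [//|i IH] _ hi z hz.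
  case: (posnP i) => i0.
    case: (posnP (pos T z)) => c.
      by rewrite (pos_inj hT (etrans c (esym T0))) u0 T0.
    by rewrite (pos_inj hT (_ : pos T z = pos T z1)) ?u1 ?T1 //; lia.
  have IH' := IH ltac:(lia) ltac:(lia).
  case: (ltnP (pos T z) i.+1) => c; first by apply: IH'; lia.
  have ez : pos T z = i.+1 by lia.
  have [y py] := pos_surj hT (i := i) ltac:(lia).
  have [w pw] := pos_surj hT (i := i.-1) ltac:(lia).
  have uy : pos u y = i by rewrite IH' py.
  have uw : pos u w = i.-1 by rewrite IH' pw //; lia.
  have nyz : y != z by apply/eqP => e; move: py; rewrite e; lia.
  have ar : is_arc u [set y; z].
    apply: H => //; apply: arc_seg_is_arc; exists i, i.+2; split; first by lia.
    by left; apply: segment_pair.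
  case: (adjacent_pos hu nyz ar); rewrite uy ez => c2; try lia.
  have e : w = z by apply: (pos_inj hu); lia.
  by move: pw; rewrite e ez; lia.
have e : forall z, pos u z = pos T z.
  move=> z; apply: (key n.-1); try lia; have := pos_ltn z hT; lia.
have su := ordering_size hu; have sT := ordering_size hT.
apply: (eq_from_nth (x0 := x0)); first by rewrite su sT.
move=> i hi; rewrite su in hi.
have [z pz] := pos_surj hT (i := i) hi.
rewrite -pz -{1}(e z) /pos !nth_index //; exact: ordering_mem.
Qed.


Lemma pos_rot_rev t x : is_ordering t ->
  pos (rot n.-1 (rev t)) x = if 0 < pos t x then n - pos t x else 0.
Proof.
move=> ht; rewrite pos_rot ?ordering_rev //; last by lia.
by rewrite pos_rev //; have px := pos_ltn x ht; case: ifP => c1; case: ifP => c2; lia.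
Qed.

Lemma is_arc_first_last t x y : is_ordering t -> 2 < n ->
  pos t x = 0 -> pos t y = n.-1 -> is_arc t [set x; y].
Proof.
move=> ht n3 px py; apply: arc_seg_is_arc; exists 1, n.-1; split; first by lia.
right => z; rewrite !inE.
case: (eqVneq z x) => [->|nzx]; first by rewrite px.
case: (eqVneq z y) => [->|nzy]; first by rewrite py; lia.
have pz := pos_ltn z ht.
have a1 : pos t z <> 0 by move=> e; move/eqP: nzx; apply; apply: (pos_inj ht); rewrite e px.
have a2 : pos t z <> n.-1 by move=> e; move/eqP: nzy; apply; apply: (pos_inj ht); rewrite e py.
lia.
Qed.

Lemma eq_or_reflect_of_adjacent u t x0 : is_ordering u -> is_ordering t -> 2 < n ->
  (forall x y, x != y -> is_arc t [set x; y] -> is_arc u [set x; y]) ->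
  pos u x0 = 0 -> pos t x0 = 0 -> u = t \/ u = rot n.-1 (rev t).
Proof.
move=> hu ht n3 H u0 t0.
have [y1 p1] := pos_surj ht (i := 1) ltac:(lia).
have [yl pl] := pos_surj ht (i := n.-1) ltac:(lia).
have n01 : x0 != y1 by apply/eqP => e; move: p1; rewrite -e t0.
have n0l : x0 != yl by apply/eqP => e; move: pl; rewrite -e t0; lia.
have a01 : is_arc u [set x0; y1].
  apply: H => //; apply: arc_seg_is_arc; exists 0, 2; split; first by lia.
  by left; apply: segment_pair.
have a0l : is_arc u [set x0; yl] by apply: H => //; apply: is_arc_first_last.
case: (adjacent_pos hu n01 a01); rewrite u0.
- by move=> u1; left; exact: (eq_ordering_of_adjacent hu ht n3 H u0 t0 u1 p1).
- by [].
- move=> [_ u1]; right.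
  set T := rot n.-1 (rev t).
  have hT : is_ordering T by apply/ordering_rot/ordering_rev.
  have cT : circ_equiv t T by exists n.-1; right.
  have T0 : pos T x0 = 0 by rewrite pos_rot_rev // t0.
  have T1 : pos T yl = 1 by rewrite pos_rot_rev // pl; case: ifP; lia.
  have HT x y : x != y -> is_arc T [set x; y] -> is_arc u [set x; y].
    by move=> nxy ar; apply: H => //; rewrite (is_arc_circE _ ht cT).
  have ul : pos u yl = 1.
    case: (adjacent_pos hu n0l a0l); rewrite u0 //.
    - move=> [_ e]; have e2 : yl = y1 by apply: (pos_inj hu); rewrite e u1.
      by move: pl; rewrite e2 p1; lia.
    - move=> [e _]; have e2 : yl = x0 by apply: (pos_inj hu); rewrite e u0.
      by move: pl; rewrite e2 t0; lia.
  exact: (eq_ordering_of_adjacent hu hT n3 HT u0 T0 ul T1).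
- move=> [e _]; have e2 : y1 = x0 by apply: (pos_inj hu); rewrite e u0.
  by move: p1; rewrite e2 t0.
Qed.

Lemma circ_equiv_of_adjacent s t : is_ordering s -> is_ordering t -> 2 < n ->
  (forall x y, x != y -> is_arc t [set x; y] -> is_arc s [set x; y]) -> circ_equiv s t.
Proof.
move=> hs ht n3 H.
have [x0 t0] := pos_surj ht (i := 0) ltac:(lia).
set u := rot (pos s x0) s.
have hu : is_ordering u by apply: ordering_rot.
have u0 : pos u x0 = 0 by rewrite pos_rot ?ltnn ?subnn //; apply/ltnW/pos_ltn.
have Hu x y : x != y -> is_arc t [set x; y] -> is_arc u [set x; y].
  by move=> nxy /(H _ _ nxy); apply: is_arc_rot.
case: (eq_or_reflect_of_adjacent hu ht n3 Hu u0 t0) => e.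
  by exists (pos s x0); left; rewrite -e.
have e2 : rev t = rotr n.-1 u by rewrite e rotK.
have e3 : t = rot n.-1 (rotr (pos s x0) (rev s)) by rewrite -rev_rot -rev_rotr -e2 revK.
move: e3; rewrite /rotr rot_rot_add => e3.
by exists (rot_add (rev s) (size (rev s) - pos s x0) n.-1); right.
Qed.

End Adjacency.

Lemma ex_maximal (T : Type) (P : T -> Prop) (f : T -> nat) m :
  (exists x, P x) -> (forall x, P x -> f x <= m) ->
  exists x, P x /\ forall y, P y -> f y <= f x.
Proof.
move=> [x0 Px0] bounded; apply: NNPP => nomax.
have up x : P x -> exists y, P y /\ f x < f y.
  move=> Px; apply: NNPP => noup; apply: nomax; exists x; split => // y Py.
  by rewrite leqNgt; apply/negP => lt; apply: noup; exists y.
have above k : exists x, P x /\ k <= f x.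
  elim: k => [|k [x [Px le]]]; first by exists x0.
  by have [y [Py lt]] := up x Px; exists y; split => //; apply: leq_ltn_trans lt.
by have [x [Px le]] := above m.+1; have := bounded x Px; lia.
Qed.

Section Circular.
Variable X : finType.
Local Notation n := #|X|.
Implicit Types (s t u : seq X) (x y : X) (A I K : {set X}) (P : {set {set X}})
  (S : {set {set {set X}}}).

Lemma split_of_inj K K' : split_of K = split_of K' -> K = K' \/ K = ~: K'.
Proof.
move=> e; have : K \in split_of K' by rewrite -e !inE eqxx.
by rewrite !inE => /orP [] /eqP ->; [left | right].
Qed.

Lemma circular_splitP s P : is_ordering s ->
  circular_split s P <-> exists K, [/\ P = split_of K, is_arc s K, K != set0 & K != setT].
Proof.
move=> h; split => [[k [l [l0 ln ->]]]|[K [-> ar K0 KT]]].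
  exists (interval s k l); split => //; first exact: interval_is_arc.
    have [x px] := pos_surj (ordering_rot k h) (i := 0) ltac:(lia).
    by apply/set0Pn; exists x; rewrite mem_interval // px.
  have [y py] := pos_surj (ordering_rot k h) (i := l) ltac:(lia).
  by apply/eqP => /setP /(_ y); rewrite mem_interval // py ltnn inE.
have [k [l [l0 ln e]]] := is_arc_interval h ar K0 KT.
by exists k, l; rewrite -e.
Qed.

Lemma is_arc_of_circular_split s K : is_ordering s ->
  circular_split s (split_of K) -> is_arc s K.
Proof.
move=> h /(circular_splitP _ h) [K' [eP ar _ _]].
by case: (split_of_inj eP) => ->; last exact: is_arcC.
Qed.

Lemma circular_circ S s t : is_ordering s -> circ_equiv s t -> circular S s -> circular S t.
Proof.
move=> h ce cs P /cs /(circular_splitP _ h) [K [-> ar K0 KT]].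
apply/(circular_splitP _ (ordering_circ h ce)); exists K; split => //.
exact: is_arc_circ ar.
Qed.

Lemma circular_twist S s k l : is_ordering s -> l <= n -> circular S s ->
  (forall P, P \in S -> compatible (split_of (interval s k l)) P) ->
  circular S (twist s k l).
Proof.
move=> h hl cs adm P PS; have := cs P PS; have := adm P PS.
move=> + /(circular_splitP _ h) [K [eP ar K0 KT]]; rewrite eP => /compatible_splitP cp.
apply/(circular_splitP _ (ordering_twist k l h)); exists K; split => //.
exact: is_arc_twist.
Qed.

Lemma circular_of_twist_reach S s t : twist_reach S s t -> is_ordering s ->
  circular S s -> circular S t.
Proof.
elim=> [s1 t1 ce h cs | s1 u1 t1 [k [l [_ hl adm ce]]] _ IH h cs].
  exact: circular_circ ce cs.
have h' := ordering_twist k l h.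
apply: IH; first exact: ordering_circ ce.
by apply: circular_circ ce _ => //; apply: circular_twist => //; lia.
Qed.

Definition common_arcs s t : {set {set X}} := [set A | is_arc s A && is_arc t A].

Lemma maximal_candidate s t : 2 < n -> is_ordering s -> is_ordering t -> ~ circ_equiv s t ->
  exists R1 R2, candidate s t R1 R2 /\
    forall R1' R2', candidate s t R1' R2' -> #|R1' :|: R2'| <= #|R1 :|: R2|.
Proof.
move=> n3 hs ht nce.
have [x [y [nxy aty nasy]]] :
    exists x y, [/\ x != y, is_arc t [set x; y] & ~~ is_arc s [set x; y]].
  apply: NNPP => hh; apply: nce; apply: circ_equiv_of_adjacent => // x y nxy aty.
  by apply: NNPP => /negP nas; apply: hh; exists x, y.
have cand0 : candidate s t [set x] [set y].
  split; first by apply/set0Pn; exists x; rewrite inE.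
  split; first by apply/set0Pn; exists y; rewrite inE.
  split; first by rewrite disjoints1 inE.
  by do 2 (split; first by split; apply: is_arc_set1).
have [[R1 R2] [cd maximal]] := ex_maximal (P := fun p => candidate s t p.1 p.2)
  (f := fun p => #|p.1 :|: p.2|) (ex_intro _ ([set x], [set y]) cand0)
  (fun p _ => max_card (mem (p.1 :|: p.2))).
by exists R1, R2; split => // R1' R2'; apply: (maximal (R1', R2')).
Qed.

Lemma admissible_twist_progress S s t : 2 < n -> is_ordering s -> is_ordering t ->
  circular S s -> circular S t -> ~ circ_equiv s t ->
  exists2 s', adm_twist_step S s s' &
    [/\ is_ordering s', circular S s' & #|common_arcs s t| < #|common_arcs s' t|].
Proof.
move=> n3 hs ht cs ct nce.
have [R1 [R2 [cd maximal]]] := maximal_candidate n3 hs ht nce.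
have [k [l [l2 ln cp ar]]] := merging_twist_of_candidate hs ht cd maximal.
have S_common P K : P \in S -> P = split_of K -> is_arc s K /\ is_arc t K.
  by move=> PS eP; split; apply: is_arc_of_circular_split => //; rewrite -eP; [exact: cs | exact: ct].
have adm P : P \in S -> compatible (split_of (interval s k l)) P.
  move=> PS; have [K [eP _ _ _]] := (circular_splitP _ hs).1 (cs P PS).
  by rewrite eP; apply/compatible_splitP; case: (S_common P K PS eP); exact: cp.
exists (twist s k l); first by exists k, l; split => //; exists 0; left; rewrite rot0.
split; first exact: ordering_twist.
  by apply: circular_twist => //; lia.
have [_ [_ [_ [_ [_ [h6 h7]]]]]] := cd.
apply: proper_card; apply/properP; split.
  apply/subsetP => A; rewrite !inE => /andP [a1 a2]; rewrite a2 andbT.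
  by apply: is_arc_twist => //; [lia | apply: cp].
by exists (R1 :|: R2); rewrite !inE ?ar ?h6 // (negbTE h7).
Qed.

Lemma twist_reach_of_circular S t : 2 < n -> is_ordering t -> circular S t ->
  forall s, is_ordering s -> circular S s -> twist_reach S s t.
Proof.
move=> n3 ht ct s.
have [m] := ubnP (#|[set: {set X}]| - #|common_arcs s t|); elim: m s => // m IH s lt hs cs.
case: (classic (circ_equiv s t)) => ce; first exact: tr_refl.
have [s' adm [hs' cs' more]] := admissible_twist_progress n3 hs ht cs ct ce.
apply: tr_step adm (IH _ _ hs' cs').
have : #|common_arcs s' t| <= #|[set: {set X}]| by rewrite cardsT; apply: max_card.
lia.
Qed.

End Circular.

Theorem theorem3 (X : finType) (hX : 4 <= #|X|)
  (S : {set {set {set X}}}) (pi1 pi2 : seq X)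
  (hS : forall P, P \in S -> is_split P)
  (h1 : is_ordering pi1) (h2 : is_ordering pi2)
  (hcirc : circular S pi1) :
  circular S pi2 <-> twist_reach S pi1 pi2.
Proof.
split => [c2 | reach].
  exact: twist_reach_of_circular (ltnW hX) h2 c2 pi1 h1 hcirc.
exact: circular_of_twist_reach reach h1 hcirc.
Qed.
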